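(* The rational group $\mathcal{R}$ is full: every homeomorphism of $\{0,1\}^\omega$ that locally agrees with $\mathcal{R}$ belongs to $\mathcal{R}$.
   Context: An asynchronous binary transducer is $(S,s_0,t,o)$ with $S$ finite, $s_0\in S$, $t\colon S\times\{0,1\}\to S$, $o\colon S\times\{0,1\}\to\{0,1\}^*$. For a state $s$ and sequence $\sigma_1\sigma_2\cdots$ let $s_1=s$, $s_{n+1}=t(s_n,\sigma_n)$, and $o(s,\sigma_1\sigma_2\cdots)=o(s_1,\sigma_1)o(s_2,\sigma_2)\cdots$. A homeomorphism $f$ of $\{0,1\}^\omega$ is rational if some transducer satisfies $f(\psi)=o(s_0,\psi)$ for all $\psi\in\{0,1\}^\omega$; $\mathcal{R}$ is the group of rational homeomorphisms. A homeomorphism $h$ locally agrees with a group $G$ if every point has a neighborhood $U$ and some $g\in G$ with $h|_U=g|_U$. *)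

From HB Require Import structures.
From mathcomp Require Import all_boot all_order all_algebra.
From mathcomp Require Import all_classical all_reals all_analysis.
Set Implicit Arguments. Unset Strict Implicit. Unset Printing Implicit Defensive.

(* Cantor space {0,1}^omega with the product topology: [cantor_space]
   from mathcomp-analysis (points are functions nat -> bool). *)

Definition is_homeomorphism (T : topologicalType) (f : T -> T) : Prop :=
  exists g : T -> T, cancel f g /\ cancel g f /\ continuous f /\ continuous g.

(* Asynchronous binary transducer (S, s0, t, o), S finite. *)
Record transducer := Transducer {
  tr_state : finType;
  tr_init : tr_state;
  tr_trans : tr_state -> bool -> tr_state;
  tr_out : tr_state -> bool -> seq bool }.

(* s_1 = s, s_{n+1} = t(s_n, sigma_n); here indexed from 0:
   run s psi n = s_{n+1}, i.e. the state before reading psi n. *)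
Fixpoint tr_run (A : transducer) (s : tr_state A) (psi : nat -> bool) (n : nat)
  : tr_state A :=
  match n with
  | 0 => s
  | n'.+1 => tr_trans (tr_run s psi n') (psi n')
  end.

Fixpoint tr_out_prefix (A : transducer) (s : tr_state A) (psi : nat -> bool)
  (n : nat) : seq bool :=
  match n with
  | 0 => [::]
  | n'.+1 => tr_out_prefix s psi n' ++ tr_out (tr_run s psi n') (psi n')
  end.

(* The infinite word o(s, psi) equals phi : the concatenation of the outputs
   is infinite and every finite partial concatenation is a prefix of phi. *)
Definition tr_output_is (A : transducer) (s : tr_state A) (psi phi : nat -> bool)
  : Prop :=
  (forall m, exists n, m <= size (tr_out_prefix s psi n)) /\
  (forall n i, i < size (tr_out_prefix s psi n) ->
     nth false (tr_out_prefix s psi n) i = phi i).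

Definition rational_homeo (f : cantor_space -> cantor_space) : Prop :=
  is_homeomorphism f /\
  exists A : transducer, forall psi : cantor_space,
    tr_output_is (tr_init A) psi (f psi).

Definition locally_agrees (G : (cantor_space -> cantor_space) -> Prop)
  (h : cantor_space -> cantor_space) : Prop :=
  forall x : cantor_space, exists U : set cantor_space,
    nbhs x U /\ exists g, G g /\ forall y, U y -> h y = g y.

From HB Require Import structures.
From mathcomp Require Import all_boot all_order all_algebra.
From mathcomp Require Import all_classical all_reals all_analysis.
Set Implicit Arguments. Unset Strict Implicit. Unset Printing Implicit Defensive.
Local Open Scope classical_set_scope.

(* By compactness of Cantor space, local agreement with rational maps yields a
   single depth n such that on every cylinder of words with a fixed prefix of
   length n the map h is computed by some transducer.  There are only finitely
   many such prefixes, so one transducer can first read and store the prefix in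
   its state, then replay it through the transducer responsible for that
   cylinder and continue as that transducer. *)

Definition cylinder (x : cantor_space) (n : nat) : set cantor_space :=
  [set y | forall i, (i < n)%N -> y i = x i].

Lemma cylinderS (x : cantor_space) m n :
  (m <= n)%N -> cylinder x n `<=` cylinder x m.
Proof. by move=> mn y xy i im; apply: xy; exact: leq_trans mn. Qed.

Lemma cylinder_nbhs (x : cantor_space) n : nbhs x (cylinder x n).
Proof.
elim: n => [|n IHn]; first by apply: filterS filterT => y _ i.
have xn : nbhs x (proj n @^-1` [set x n] : set cantor_space).
  exact: (@proj_continuous nat (fun _ => bool) n x _ (discrete_set1 _)).
apply: filterS (filterI IHn xn) => y [xy yn] i.
by rewrite ltnS leq_eqVlt => /orP[/eqP ->|]; [exact: yn|exact: xy].
Qed.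

Lemma cylinder_open (x : cantor_space) n : open (cylinder x n).
Proof.
rewrite openE => y xy; apply: filterS (cylinder_nbhs y n) => z yz i i_lt.
by rewrite yz // xy.
Qed.

Lemma nbhs_cylinder (x : cantor_space) U :
  nbhs x U -> exists n, cylinder x n `<=` U.
Proof.
(* Otherwise points [y n] outside [U] that agree with [x] below [n] converge
   to [x]. *)
move=> Ux; apply: contrapT => noU.
have out n : exists y, cylinder x n y /\ ~ U y.
  apply: contrapT => all_in; apply: noU; exists n => y xy.
  by apply: contrapT => Uy; apply: all_in; exists y.
pose y n := projT1 (cid (out n)).
have [xy yU] : (forall n, cylinder x n (y n)) /\ (forall n, ~ U (y n)).
  by split=> n; rewrite /y; case: cid => ? [].
have y_cvg : y @ \oo --> (x : {ptws nat -> bool}).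
  apply/(@pointwise_cvgP nat bool (y @ \oo) x _) => t A At.
  exists t.+1 => // m /= tm; rewrite (xy m t tm).
  exact: nbhs_singleton.
have [m _ Um] := y_cvg U Ux.
by apply: (yU m); apply: Um => /=.
Qed.

(* A Lebesgue-number argument with cylinders as the balls. *)
Lemma cylinder_uniform (P : set cantor_space -> Prop) :
  (forall U V, V `<=` U -> P U -> P V) ->
  (forall x : cantor_space, exists U, nbhs x U /\ P U) ->
  exists n, forall x : cantor_space, P (cylinder x n).
Proof.
move=> PS Ploc.
have depth x : exists n, P (cylinder x n).
  have [U [Ux PU]] := Ploc x; have [n xU] := nbhs_cylinder Ux.
  by exists n; exact: PS PU.
pose d x := projT1 (cid (depth x)).
have Pd x : P (cylinder x (d x)) by rewrite /d; case: cid.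
have := cantor_space_compact; rewrite compact_cover.
case/(_ cantor_space setT (fun x => cylinder x (d x))) => [x _|y _|].
- exact: cylinder_open.
- by exists y.
move=> D _ Dcover; exists (\max_(x <- finmap.enum_fset D) d x) => y.
have [x xD xy] := Dcover y I.
apply: PS (Pd x) => z yz i i_lt; rewrite yz ?xy //.
by apply: leq_trans i_lt _; exact: leq_bigmax_seq.
Qed.

Lemma tr_run_ext (A : transducer) (s : tr_state A) (psi phi : nat -> bool) n :
  (forall i, (i < n)%N -> psi i = phi i) -> tr_run s psi n = tr_run s phi n.
Proof.
elim: n => [//|n IHn] eq_n /=.
by rewrite IHn ?eq_n // => i /ltnW; exact: eq_n.
Qed.

Lemma tr_out_prefix_ext (A : transducer) (s : tr_state A) (psi phi : nat -> bool) n :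
  (forall i, (i < n)%N -> psi i = phi i) ->
  tr_out_prefix s psi n = tr_out_prefix s phi n.
Proof.
elim: n => [//|n IHn] eq_n /=.
have eq_n' i : (i < n)%N -> psi i = phi i by move/ltnW; exact: eq_n.
by rewrite IHn // (tr_run_ext s eq_n') eq_n.
Qed.

Lemma size_tr_out_prefix_monotone (A : transducer) (s : tr_state A)
    (psi : nat -> bool) m n :
  (m <= n)%N -> (size (tr_out_prefix s psi m) <= size (tr_out_prefix s psi n))%N.
Proof.
move=> /subnKC <-; elim: (n - m)%N => [|k IHk]; first by rewrite addn0.
by rewrite addnS /= size_cat (leq_trans IHk) // leq_addr.
Qed.

Section Dispatch.
Variable n : nat.
Local Notation word := {ffun 'I_n.+1 -> bool}.
Variable A : word -> transducer.

Definition word_ext (w : word) : nat -> bool := fun i => w (inord i).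

Definition prefix_word (psi : nat -> bool) : word := [ffun i : 'I_n.+1 => psi i].

Definition partial_prefix (psi : nat -> bool) (k : nat) : word :=
  [ffun i : 'I_n.+1 => (i < k)%N && psi i].

Definition set_letter (w : word) (k : 'I_n.+1) (b : bool) : word :=
  [ffun i => if i == k then b else w i].

Lemma word_ext_prefix_word (psi : nat -> bool) i :
  (i < n.+1)%N -> word_ext (prefix_word psi) i = psi i.
Proof. by move=> i_lt; rewrite /word_ext ffunE inordK. Qed.

(* A state [inl (w, k)] has stored the first [k] letters read in [w]; the
   state [running s] simulates [A w] in its state [s]. *)
Definition dispatch_state : finType :=
  ((word * 'I_n.+1) + {w : word & tr_state (A w)})%type.

Definition running (w : word) (s : tr_state (A w)) : dispatch_state :=
  inr (Tagged (fun w => tr_state (A w)) s).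

Definition dispatch_trans (s : dispatch_state) (b : bool) : dispatch_state :=
  match s with
  | inl (w, k) =>
      let w' := set_letter w k b in
      if (k < n)%N then inl (w', inord k.+1)
      else running (tr_run (tr_init (A w')) (word_ext w') n.+1)
  | inr p => running (tr_trans (tagged p) b)
  end.

Definition dispatch_out (s : dispatch_state) (b : bool) : seq bool :=
  match s with
  | inl (w, k) =>
      let w' := set_letter w k b in
      if (k < n)%N then [::]
      else tr_out_prefix (tr_init (A w')) (word_ext w') n.+1
  | inr p => tr_out (tagged p) b
  end.

Definition dispatch : transducer :=
  @Transducer dispatch_state (inl ([ffun => false], ord0))
    dispatch_trans dispatch_out.

Lemma set_letter_partial_prefix (psi : nat -> bool) k : (k <= n)%N ->
  set_letter (partial_prefix psi k) (inord k) (psi k) = partial_prefix psi k.+1.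
Proof.
move=> kn; have k_val : (inord k : 'I_n.+1) = k :> nat by rewrite inordK.
apply/ffunP => i; rewrite !ffunE -val_eqE /= k_val.
rewrite [X in _ = X && _]ltnS [X in _ = X && _]leq_eqVlt.
by case: eqP => [->|].
Qed.

Lemma partial_prefix_full (psi : nat -> bool) :
  partial_prefix psi n.+1 = prefix_word psi.
Proof. by apply/ffunP => i; rewrite !ffunE ltn_ord. Qed.

Lemma dispatch_reading (psi : nat -> bool) k : (k <= n)%N ->
  tr_run (tr_init dispatch) psi k = inl (partial_prefix psi k, inord k) /\
  tr_out_prefix (tr_init dispatch) psi k = [::].
Proof.
elim: k => [_|k IHk kn].
  by split=> //=; congr (inl (_, _)); apply: val_inj; rewrite /= inordK.
have [run_k out_k] := IHk (ltnW kn).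
by rewrite /= run_k out_k /= inordK ?kn ?set_letter_partial_prefix // ltnW.
Qed.

Lemma dispatch_dispatched (psi : nat -> bool) k : (n.+1 <= k)%N ->
  let B := A (prefix_word psi) in
  tr_run (tr_init dispatch) psi k = running (tr_run (tr_init B) psi k) /\
  tr_out_prefix (tr_init dispatch) psi k = tr_out_prefix (tr_init B) psi k.
Proof.
elim: k => [//|k IHk]; rewrite ltnS leq_eqVlt => /orP[/eqP <- B|/IHk[+ +] B].
  have [run_n out_n] := dispatch_reading psi (leqnn n).
  rewrite -(tr_run_ext (tr_init B) (@word_ext_prefix_word psi)).
  rewrite -(tr_out_prefix_ext (tr_init B) (@word_ext_prefix_word psi)).
  rewrite [tr_run _ psi _]/= [tr_out_prefix _ psi _]/= run_n out_n /=.
  by rewrite inordK // ltnn set_letter_partial_prefix // partial_prefix_full.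
by rewrite /= => -> ->.
Qed.

Lemma dispatch_output (F : (nat -> bool) -> (nat -> bool)) :
  (forall psi, tr_output_is (tr_init (A (prefix_word psi))) psi (F psi)) ->
  forall psi, tr_output_is (tr_init dispatch) psi (F psi).
Proof.
move=> A_F psi; have [A_long A_prefix] := A_F psi; split.
  move=> m; have [k mk] := A_long m; exists (maxn k n.+1).
  have [_ ->] := dispatch_dispatched psi (leq_maxr k n.+1).
  by apply: leq_trans mk _; apply: size_tr_out_prefix_monotone; exact: leq_maxl.
move=> k i; case: (leqP n.+1 k) => [nk|kn].
  by have [_ ->] := dispatch_dispatched psi nk; exact: A_prefix.
by have [_ ->] := dispatch_reading psi (kn : (k <= n)%N).
Qed.

End Dispatch.

Definition rational_on (U : set cantor_space) (F : cantor_space -> cantor_space)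
  : Prop :=
  exists T : transducer, forall psi, U psi -> tr_output_is (tr_init T) psi (F psi).

Lemma rational_onS (F : cantor_space -> cantor_space) U V :
  V `<=` U -> rational_on U F -> rational_on V F.
Proof. by move=> VU [T UT]; exists T => psi /VU; exact: UT. Qed.

Lemma locally_agrees_rational_on (h : cantor_space -> cantor_space) :
  locally_agrees rational_homeo h ->
  forall x : cantor_space, exists U, nbhs x U /\ rational_on U h.
Proof.
move=> h_loc x; have [U [Ux [g [[_ [T gT]] Uhg]]]] := h_loc x.
by exists U; split=> //; exists T => psi Upsi; rewrite Uhg //; exact: gT.
Qed.

Lemma rational_on_cylinders (F : cantor_space -> cantor_space) n :
  (forall x : cantor_space, rational_on (cylinder x n) F) -> rational_on setT F.
Proof.
move=> F_cyl.
have F_word (w : {ffun 'I_n.+1 -> bool}) : rational_on (cylinder (word_ext w) n.+1) F.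
  exact: rational_onS (cylinderS (leqnSn n)) (F_cyl _).
pose A w := projT1 (cid (F_word w)).
have A_F w psi : cylinder (word_ext w) n.+1 psi ->
    tr_output_is (tr_init (A w)) psi (F psi).
  by rewrite /A; case: cid => T; exact.
have A_prefix psi : tr_output_is (tr_init (A (prefix_word n psi))) psi (F psi).
  by apply: A_F => i /word_ext_prefix_word ->.
by exists (dispatch A) => psi _; exact: dispatch_output A_prefix psi.
Qed.

Theorem proposition2p3 :
  forall h : cantor_space -> cantor_space,
    is_homeomorphism h -> locally_agrees rational_homeo h -> rational_homeo h.
Proof.
move=> h h_homeo h_loc; split=> //.
have [n h_cyl] :=
  cylinder_uniform (@rational_onS h) (locally_agrees_rational_on h_loc).
have [T hT] := rational_on_cylinders h_cyl.
by exists T => psi; exact: hT.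
Qed.
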